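(* Let $N\ge 2$, $t\ge 1$, $r\ge 1$ be integers with $m=t+r\le N$, and let $K\ge N$. Consider the action of the group $\mathcal{L}$ (defined in the context) on pairs $(\mathbf{z},\mathbf{S})$, with $\mathbf{z}\in\mathbb{C}^{N}$ and $\mathbf{S}\in\mathbb{C}^{N\times N}$ Hermitian positive definite, given by $l(\mathbf{z},\mathbf{S})=(\mathbf{G}\mathbf{z}+\mathbf{f},\mathbf{G}\mathbf{S}\mathbf{G}^\dagger)$ for $(\mathbf{G},\mathbf{f})\in\mathcal{L}$. Then a maximal invariant statistic with respect to $\mathcal{L}$ is $$\mathbf{t}_1(\mathbf{z},\mathbf{S})=\begin{cases}\begin{bmatrix}\mathbf{z}_{2.3}^\dagger\mathbf{S}_{2.3}^{-1}\mathbf{z}_{2.3}\\ \mathbf{z}_3^\dagger\mathbf{S}_{33}^{-1}\mathbf{z}_3\end{bmatrix}, & m<N,\\[2mm] \mathbf{z}_2^\dagger\mathbf{S}_{22}^{-1}\mathbf{z}_2, & m=N,\end{cases}$$ where $\mathbf{z}_{2.3}=\mathbf{z}_2-\mathbf{S}_{23}\mathbf{S}_{33}^{-1}\mathbf{z}_3$ and $\mathbf{S}_{2.3}=\mathbf{S}_{22}-\mathbf{S}_{23}\mathbf{S}_{33}^{-1}\mathbf{S}_{32}$.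
   Context: Partition $\mathbf{z}=[\mathbf{z}_1^T\ \mathbf{z}_2^T\ \mathbf{z}_3^T]^T$ with $\mathbf{z}_1\in\mathbb{C}^{t}$, $\mathbf{z}_2\in\mathbb{C}^{r}$, $\mathbf{z}_3\in\mathbb{C}^{N-m}$, and partition $\mathbf{S}$ conformably into blocks $\mathbf{S}_{ij}$, $i,j\in\{1,2,3\}$, of sizes given by replacing $1,2,3$ with $t,r,N-m$. When $m=N$ the ''3''-blocks are absent. (In the application, $\mathbf{S}=\sum_{k=1}^K\mathbf{z}_k\mathbf{z}_k^\dagger$ is the sample matrix of $K$ secondary data vectors.) The set $\mathcal{G}$ consists of all nonsingular $N\times N$ block upper-triangular matrices $\mathbf{G}=\begin{bmatrix}\mathbf{G}_{11}&\mathbf{G}_{12}&\mathbf{G}_{13}\\ \mathbf{0}&\mathbf{G}_{22}&\mathbf{G}_{23}\\ \mathbf{0}&\mathbf{0}&\mathbf{G}_{33}\end{bmatrix}$ with $\mathbf{G}_{11}\in GL(t)$, $\mathbf{G}_{22}\in GL(r)$, $\mathbf{G}_{33}\in GL(N-m)$ (block sizes conforming to the partition above; the third block row/column absent if $m=N$). The set $\mathcal{F}$ consists of all $\mathbf{f}=[\mathbf{f}_{11}^T\ \mathbf{0}^T]^T\in\mathbb{C}^N$ with $\mathbf{f}_{11}\in\mathbb{C}^{t}$. The group $\mathcal{L}$ is $\mathcal{G}\times\mathcal{F}$ with operation $(\mathbf{G}_1,\mathbf{f}_1)\circ(\mathbf{G}_2,\mathbf{f}_2)=(\mathbf{G}_2\mathbf{G}_1,\mathbf{G}_2\mathbf{f}_1+\mathbf{f}_2)$.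 A statistic $\mathbf{t}$ is maximal invariant with respect to $\mathcal{L}$ if (i) $\mathbf{t}(\mathbf{z},\mathbf{S})=\mathbf{t}(l(\mathbf{z},\mathbf{S}))$ for all $l\in\mathcal{L}$, and (ii) $\mathbf{t}(\mathbf{z},\mathbf{S})=\mathbf{t}(\bar{\mathbf{z}},\bar{\mathbf{S}})$ implies there exists $l\in\mathcal{L}$ with $(\mathbf{z},\mathbf{S})=l(\bar{\mathbf{z}},\bar{\mathbf{S}})$. *)

From HB Require Import structures.
From mathcomp Require Import all_boot all_order all_algebra.
From mathcomp Require Import reals complex.
Set Implicit Arguments. Unset Strict Implicit. Unset Printing Implicit Defensive.
Import Order.TTheory GRing.Theory Num.Theory.
Local Open Scope ring_scope.

Section Defs.
Variable R : realType.
Local Notation C := R[i].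
(* block sizes: t, r, n3 = N - m ;  N = t + r + n3 *)
Variables t r n3 : nat.
Local Notation N := (t + r + n3)%N.

Definition ctr m n (A : 'M[C]_(m, n)) : 'M[C]_(n, m) := (map_mx Num.conj A)^T.

Definition hermitian_pd (S : 'M[C]_N) : Prop :=
  ctr S = S /\ forall v : 'cV[C]_N, v != 0 -> 0 < (ctr v *m S *m v) 0 0.

Definition z1 (z : 'cV[C]_N) : 'cV[C]_t := usubmx (usubmx z).
Definition z2 (z : 'cV[C]_N) : 'cV[C]_r := dsubmx (usubmx z).
Definition z3 (z : 'cV[C]_N) : 'cV[C]_n3 := dsubmx z.
Definition S22 (S : 'M[C]_N) : 'M[C]_r := drsubmx (ulsubmx S).
Definition S23 (S : 'M[C]_N) : 'M[C]_(r, n3) := dsubmx (ursubmx S).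
Definition S32 (S : 'M[C]_N) : 'M[C]_(n3, r) := rsubmx (dlsubmx S).
Definition S33 (S : 'M[C]_N) : 'M[C]_n3 := drsubmx S.

Definition z23 z S := z2 z - S23 S *m invmx (S33 S) *m z3 z.
Definition S23s S := S22 S - S23 S *m invmx (S33 S) *m S32 S.

Definition t1 (z : 'cV[C]_N) (S : 'M[C]_N) : seq C :=
  if n3 == 0%N then [:: (ctr (z2 z) *m invmx (S22 S) *m z2 z) 0 0]
  else [:: (ctr (z23 z S) *m invmx (S23s S) *m z23 z S) 0 0;
           (ctr (z3 z) *m invmx (S33 S) *m z3 z) 0 0].

Definition in_calG (G : 'M[C]_N) : Prop :=
  G \in unitmx /\
  (dlsubmx G = 0 /\ dlsubmx (ulsubmx G) = 0) /\
  [/\ ulsubmx (ulsubmx G) \in unitmx,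
      drsubmx (ulsubmx G) \in unitmx &
      drsubmx G \in unitmx].

Definition in_calF (f : 'cV[C]_N) : Prop :=
  dsubmx (usubmx f) = 0 /\ dsubmx f = 0.

Definition in_calL (l : 'M[C]_N * 'cV[C]_N) : Prop := in_calG l.1 /\ in_calF l.2.

Definition act (l : 'M[C]_N * 'cV[C]_N) (x : 'cV[C]_N * 'M[C]_N)
  : 'cV[C]_N * 'M[C]_N :=
  (l.1 *m x.1 + l.2, l.1 *m x.2 *m ctr l.1).

Definition in_dom (x : 'cV[C]_N * 'M[C]_N) : Prop := hermitian_pd x.2.

Definition maximal_invariant (T : Type) (s : 'cV[C]_N -> 'M[C]_N -> T) : Prop :=
  (forall x l, in_dom x -> in_calL l -> s (act l x).1 (act l x).2 = s x.1 x.2) /\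
  (forall x y, in_dom x -> in_dom y -> s x.1 x.2 = s y.1 y.2 ->
     exists2 l, in_calL l & x = act l y).
End Defs.

(* A block upper-triangular G = [[A, B], [0, D]] acts on the lower block of
   (z, S) by the congruence D, and on its Schur complement and the
   corresponding residual of z by the congruence A (the translation f only
   shifts the top residual). Applied once to the splitting (t + r) + (N - m)
   and once more to t + r, this leaves z_{2.3}^† S_{2.3}^-1 z_{2.3} and
   z_3^† S_33^-1 z_3 invariant. Conversely, for positive definite P, Q the value
   a^† P^-1 a = b^† Q^-1 b determines the pair (a, P) up to congruence: writing
   P = L L^†, Q = M M^†, the vectors L^-1 a and M^-1 b have equal norm and are
   identified by a unitary U, so M U L^-1 maps (a, P) to (b, Q). Matching the
   three diagonal blocks this way and solving for the off-diagonal blocks of G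
   recovers (z, S) from (w, T); the top block of z is absorbed by f. *)
From HB Require Import structures.
From mathcomp Require Import all_boot all_order all_algebra.
From mathcomp Require Import reals complex.
From mathcomp Require Import ring.
From mathcomp Require Import spectral.
Set Implicit Arguments. Unset Strict Implicit. Unset Printing Implicit Defensive.
Import Order.TTheory GRing.Theory Num.Theory.
Local Open Scope ring_scope.

Section Adjoint.
Variable R : realType.
Local Notation C := R[i].
Implicit Types (m n p : nat).

Lemma ctr_mxE m n (A : 'M[C]_(m, n)) i j : ctr A i j = (A j i)^*.
Proof. by rewrite /ctr !mxE. Qed.

Lemma ctrK m n (A : 'M[C]_(m, n)) : ctr (ctr A) = A.
Proof. by apply/matrixP => i j; rewrite !mxE conjCK. Qed.

Lemma ctrM m n p (A : 'M[C]_(m, n)) (B : 'M[C]_(n, p)) :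
  ctr (A *m B) = ctr B *m ctr A.
Proof. by rewrite /ctr map_mxM trmx_mul. Qed.

Lemma ctrD m n (A B : 'M[C]_(m, n)) : ctr (A + B) = ctr A + ctr B.
Proof. by apply/matrixP => i j; rewrite !mxE rmorphD. Qed.

Lemma ctrN m n (A : 'M[C]_(m, n)) : ctr (- A) = - ctr A.
Proof. by apply/matrixP => i j; rewrite !mxE rmorphN. Qed.

Lemma ctrB m n (A B : 'M[C]_(m, n)) : ctr (A - B) = ctr A - ctr B.
Proof. by rewrite ctrD ctrN. Qed.

Lemma ctrZ m n a (A : 'M[C]_(m, n)) : ctr (a *: A) = a^* *: ctr A.
Proof. by apply/matrixP => i j; rewrite !mxE rmorphM. Qed.

Lemma ctr0 m n : ctr (0 : 'M[C]_(m, n)) = 0.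
Proof. by apply/matrixP => i j; rewrite !mxE rmorph0. Qed.

Lemma ctr1 n : ctr (1%:M : 'M[C]_n) = 1%:M.
Proof. by rewrite /ctr map_mx1 trmx1. Qed.

Lemma ctr_eq0 m n (A : 'M[C]_(m, n)) : (ctr A == 0) = (A == 0).
Proof. by apply/eqP/eqP => [h|->]; [rewrite -[A]ctrK h|]; rewrite ctr0. Qed.

Lemma ctr_block_mx m1 m2 n1 n2 (a : 'M[C]_(m1, n1)) (b : 'M[C]_(m1, n2))
  (c : 'M[C]_(m2, n1)) (d : 'M[C]_(m2, n2)) :
  ctr (block_mx a b c d) = block_mx (ctr a) (ctr c) (ctr b) (ctr d).
Proof. by rewrite /ctr map_block_mx tr_block_mx. Qed.

Lemma ctr_col_mx m1 m2 n (a : 'M[C]_(m1, n)) (b : 'M[C]_(m2, n)) :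
  ctr (col_mx a b) = row_mx (ctr a) (ctr b).
Proof. by rewrite /ctr map_col_mx tr_col_mx. Qed.

Lemma ctr_ulsubmx m1 m2 n1 n2 (A : 'M[C]_(m1 + m2, n1 + n2)) :
  ctr (ulsubmx A) = ulsubmx (ctr A).
Proof. by rewrite -{2}[A]submxK ctr_block_mx block_mxKul. Qed.

Lemma ctr_ursubmx m1 m2 n1 n2 (A : 'M[C]_(m1 + m2, n1 + n2)) :
  ctr (ursubmx A) = dlsubmx (ctr A).
Proof. by rewrite -{2}[A]submxK ctr_block_mx block_mxKdl. Qed.

Lemma ctr_dlsubmx m1 m2 n1 n2 (A : 'M[C]_(m1 + m2, n1 + n2)) :
  ctr (dlsubmx A) = ursubmx (ctr A).
Proof. by rewrite -{2}[A]submxK ctr_block_mx block_mxKur. Qed.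

Lemma ctr_drsubmx m1 m2 n1 n2 (A : 'M[C]_(m1 + m2, n1 + n2)) :
  ctr (drsubmx A) = drsubmx (ctr A).
Proof. by rewrite -{2}[A]submxK ctr_block_mx block_mxKdr. Qed.

Lemma ctr_unitmx n (A : 'M[C]_n) : (ctr A \in unitmx) = (A \in unitmx).
Proof. by rewrite /ctr unitmx_tr map_unitmx. Qed.

Lemma ctr_invmx n (A : 'M[C]_n) : ctr (invmx A) = invmx (ctr A).
Proof. by rewrite /ctr map_invmx trmx_inv. Qed.

Lemma invmxM n (A B : 'M[C]_n) : A \in unitmx -> B \in unitmx ->
  invmx (A *m B) = invmx B *m invmx A.
Proof.
move=> uA uB; have uAB : A *m B \in unitmx by rewrite unitmx_mul uA.
have e : A *m B *m (invmx B *m invmx A) = 1%:M.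
  by rewrite mulmxA mulmxK // mulmxV.
by rewrite -[LHS]mulmx1 -e mulmxA mulVmx // mul1mx.
Qed.

End Adjoint.

Section PositiveDefinite.
Variable R : realType.
Local Notation C := R[i].
Implicit Types (p q n : nat).

Definition posdef n (S : 'M[C]_n) : Prop :=
  ctr S = S /\ forall v : 'cV[C]_n, v != 0 -> 0 < (ctr v *m S *m v) 0 0.

Definition invquad n (x : 'cV[C]_n) (S : 'M[C]_n) := (ctr x *m invmx S *m x) 0 0.

Definition schur_compl p q (S : 'M[C]_(p + q)) : 'M[C]_p :=
  ulsubmx S - ursubmx S *m invmx (drsubmx S) *m dlsubmx S.

Definition schur_vec p q (z : 'cV[C]_(p + q)) (S : 'M[C]_(p + q)) : 'cV[C]_p :=
  usubmx z - ursubmx S *m invmx (drsubmx S) *m dsubmx z.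

Lemma posdef_unitmx n (S : 'M[C]_n) : posdef S -> S \in unitmx.
Proof.
move=> [hS pS]; apply: contraT => nu.
have /rowV0Pn [v /sub_kermxP vS v0] : kermx S != 0.
  by rewrite kermx_eq0 row_free_unit.
have := pS (ctr v); rewrite ctr_eq0 => /(_ v0).
by rewrite -mulmxA -{1}hS -ctrM vS ctr0 mulmx0 mxE ltxx.
Qed.

Lemma posdef_congr n (G S : 'M[C]_n) :
  G \in unitmx -> posdef S -> posdef (G *m S *m ctr G).
Proof.
move=> uG [hS pS]; split; first by rewrite !ctrM ctrK hS mulmxA.
move=> v v0; have uG' : ctr G \in unitmx by rewrite ctr_unitmx.
have Gv0 : ctr G *m v != 0.
  by apply: contra v0 => /eqP h; rewrite -[v](mulKmx uG') h mulmx0.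
by have := pS _ Gv0; rewrite ctrM ctrK !mulmxA.
Qed.

Lemma posdef_drsubmx p q (S : 'M[C]_(p + q)) : posdef S -> posdef (drsubmx S).
Proof.
move=> [hS pS]; split; first by rewrite ctr_drsubmx hS.
move=> v v0; have w0 : col_mx (0 : 'cV[C]_p) v != 0.
  by rewrite col_mx_eq0 negb_and eqxx.
have := pS _ w0; rewrite ctr_col_mx ctr0 -{1}[S]submxK mul_row_block !mul0mx !add0r.
by rewrite mul_row_col mulmx0 add0r.
Qed.

Lemma posdef_schur p q (S : 'M[C]_(p + q)) : posdef S -> posdef (schur_compl S).
Proof.
move=> PS; have ud := posdef_unitmx (posdef_drsubmx PS); move: PS => [hS pS].
split; first by rewrite /schur_compl ctrB !ctrM ctr_invmx ctr_ulsubmx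
  ctr_ursubmx ctr_dlsubmx ctr_drsubmx hS mulmxA.
move=> v v0; set w := col_mx v (- (invmx (drsubmx S) *m dlsubmx S *m v)).
have w0 : w != 0 by rewrite col_mx_eq0 negb_and v0.
have := pS _ w0; rewrite -mulmxA /w -[X in X *m col_mx _ _]submxK mul_block_col.
rewrite !mulmxN !mulmxA (mulmxV ud) mul1mx subrr ctr_col_mx mul_row_col mulmx0 addr0.
by rewrite /schur_compl !mulmxBr mulmxBl !mulmxA.
Qed.

Lemma invquad_congr n (D S : 'M[C]_n) (x : 'cV[C]_n) :
  D \in unitmx -> S \in unitmx -> invquad (D *m x) (D *m S *m ctr D) = invquad x S.
Proof.
move=> uD uS; rewrite /invquad ctrM.
have uDS : D *m S \in unitmx by rewrite unitmx_mul uD.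
rewrite invmxM ?ctr_unitmx // invmxM // -!mulmxA mulKmx //.
by rewrite !mulmxA mulmxK ?ctr_unitmx.
Qed.

Lemma invquad0 n (S : 'M[C]_n) : invquad 0 S = 0.
Proof. by rewrite /invquad ctr0 !mul0mx mxE. Qed.

Lemma invquad_dim0 n (x : 'cV[C]_n) (S : 'M[C]_n) : n = 0%N -> invquad x S = 0.
Proof. by move=> n0; subst n; rewrite /invquad mxE big_ord0. Qed.

End PositiveDefinite.

Section BlockTriangular.
Variable R : realType.
Local Notation C := R[i].
Variables p q : nat.
Implicit Types (X : 'M[C]_(p, q)) (P A : 'M[C]_p) (Q D : 'M[C]_q).

Definition unitri_mx X : 'M[C]_(p + q) := block_mx 1%:M X 0 1%:M.
Definition bdiag_mx P Q : 'M[C]_(p + q) := block_mx P 0 0 Q.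

Lemma bdiag_congr A D P Q :
  bdiag_mx A D *m bdiag_mx P Q *m ctr (bdiag_mx A D) =
  bdiag_mx (A *m P *m ctr A) (D *m Q *m ctr D).
Proof.
rewrite /bdiag_mx ctr_block_mx !ctr0 !mulmx_block.
by rewrite !(mul1mx, mulmx1, mul0mx, mulmx0, addr0, add0r).
Qed.

Lemma unitri_bdiag_blocks X P Q (z : 'cV[C]_(p + q)) : Q \in unitmx ->
  let S := unitri_mx X *m bdiag_mx P Q *m ctr (unitri_mx X) in
  [/\ drsubmx S = Q, schur_compl S = P & schur_vec z S = usubmx z - X *m dsubmx z].
Proof.
move=> uQ S; have -> : S = block_mx (P + X *m Q *m ctr X) (X *m Q) (Q *m ctr X) Q.
  rewrite /S /unitri_mx /bdiag_mx ctr_block_mx ctr0 !ctr1 !mulmx_block.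
  by rewrite !(mul1mx, mulmx1, mul0mx, mulmx0, addr0, add0r).
rewrite /schur_compl /schur_vec block_mxKul block_mxKur block_mxKdr block_mxKdl.
by rewrite !mulmxK // mulmxA addrK.
Qed.

Lemma ldl_decomp (S : 'M[C]_(p + q)) : ctr S = S -> drsubmx S \in unitmx ->
  let X := ursubmx S *m invmx (drsubmx S) in
  S = unitri_mx X *m bdiag_mx (schur_compl S) (drsubmx S) *m ctr (unitri_mx X).
Proof.
move=> hS ud X; rewrite /unitri_mx /bdiag_mx ctr_block_mx ctr0 !ctr1 !mulmx_block.
rewrite !(mul1mx, mulmx1, mul0mx, mulmx0, addr0, add0r) /X mulmxKV //.
rewrite ctrM ctr_invmx ctr_drsubmx ctr_ursubmx hS mulKVmx //.
by rewrite /schur_compl mulmxA subrK submxK.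
Qed.

Lemma block_triu_action A (B : 'M[C]_(p, q)) D (T : 'M[C]_(p + q))
    (w f : 'cV[C]_(p + q)) :
  D \in unitmx -> drsubmx T \in unitmx -> ctr T = T -> dsubmx f = 0 ->
  let G := block_mx A B 0 D in
  [/\ drsubmx (G *m T *m ctr G) = D *m drsubmx T *m ctr D,
      dsubmx (G *m w + f) = D *m dsubmx w,
      schur_compl (G *m T *m ctr G) = A *m schur_compl T *m ctr A &
      schur_vec (G *m w + f) (G *m T *m ctr G) = A *m schur_vec w T + usubmx f].
Proof.
move=> uD ud hT f0 G.
set XT := ursubmx T *m invmx (drsubmx T).
set X := (A *m XT + B) *m invmx D.
have GE : G *m unitri_mx XT = unitri_mx X *m bdiag_mx A D.
  rewrite /G /unitri_mx /bdiag_mx !mulmx_block.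
  by rewrite !(mul1mx, mulmx1, mul0mx, mulmx0, addr0, add0r) /X mulmxKV.
have eGT : G *m T *m ctr G = unitri_mx X *m
    bdiag_mx (A *m schur_compl T *m ctr A) (D *m drsubmx T *m ctr D) *m ctr (unitri_mx X).
  rewrite -bdiag_congr {1}(ldl_decomp hT ud) -/XT !mulmxA GE -!mulmxA.
  by congr (_ *m (_ *m (_ *m _))); rewrite -!ctrM GE ctrM.
have uQ : D *m drsubmx T *m ctr D \in unitmx.
  by rewrite !unitmx_mul ud uD ctr_unitmx uD.
rewrite eGT.
have [-> -> ->] := unitri_bdiag_blocks X (A *m schur_compl T *m ctr A) (G *m w + f) uQ.
have ed : dsubmx (G *m w + f) = D *m dsubmx w.
  rewrite -[w]vsubmxK /G mul_block_col raddfD /= col_mxKd f0 addr0 mul0mx add0r.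
  by rewrite col_mxKd.
split => //; rewrite ed /schur_vec raddfD /= -mul_usub_mx /G block_mxEv col_mxKu.
rewrite -[w]vsubmxK mul_row_col col_mxKu col_mxKd mulmxA /X mulmxKV //.
rewrite mulmxBr mulmxDl !mulmxA addrAC opprD addrA; congr (_ + _).
by rewrite addrAC addrK.
Qed.

(* The off-diagonal block is chosen so that G E(X_T) = E(X_S) diag(A, D),
   where E(X) = unitri_mx X and X_S = S_12 S_22^-1 is read off ldl_decomp. *)
Lemma block_triu_lift (S T : 'M[C]_(p + q)) (z w : 'cV[C]_(p + q)) A D :
  ctr S = S -> ctr T = T -> drsubmx S \in unitmx -> drsubmx T \in unitmx ->
  A *m schur_compl T *m ctr A = schur_compl S ->
  D *m drsubmx T *m ctr D = drsubmx S -> D *m dsubmx w = dsubmx z ->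
  let G := block_mx A (ursubmx S *m invmx (drsubmx S) *m D
                       - A *m (ursubmx T *m invmx (drsubmx T))) 0 D in
  G *m T *m ctr G = S /\ z - G *m w = col_mx (schur_vec z S - A *m schur_vec w T) 0.
Proof.
move=> hS hT uS uT eA eD ez G.
set XS := ursubmx S *m invmx (drsubmx S).
set XT := ursubmx T *m invmx (drsubmx T).
split.
  have GE : G *m unitri_mx XT = unitri_mx XS *m bdiag_mx A D.
    rewrite /G /unitri_mx /bdiag_mx !mulmx_block.
    by rewrite !(mul1mx, mulmx1, mul0mx, mulmx0, addr0, add0r) addrC subrK.
  rewrite {1}(ldl_decomp hT uT) -/XT !mulmxA GE -!mulmxA -ctrM GE ctrM.
  rewrite !mulmxA -(mulmxA (unitri_mx XS) (bdiag_mx A D)) -(mulmxA (unitri_mx XS)).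
  by rewrite bdiag_congr eA eD -ldl_decomp.
rewrite -[LHS]vsubmxK; congr col_mx; rewrite raddfB /=.
  rewrite -mul_usub_mx /G block_mxEv col_mxKu -{1}[w]vsubmxK mul_row_col.
  rewrite /schur_vec mulmxBl -ez -/XS -/XT !mulmxA mulmxBr !mulmxA.
  rewrite opprD !opprB !addrA [LHS]addrAC [RHS]addrAC; congr (_ + _).
  by rewrite addrAC.
rewrite -mul_dsub_mx /G block_mxEv col_mxKd -{1}[w]vsubmxK mul_row_col.
by rewrite mul0mx add0r ez subrr.
Qed.

End BlockTriangular.

Section Transport.
Variable R : realType.
Local Notation C := R[i].
Variable k : nat.
Implicit Types (u v w : 'cV[C]_k).

Definition cdot u v := (ctr u *m v) 0 0.

Lemma cdotE u v : ctr u *m v = (cdot u v)%:M.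
Proof. exact: mx11_scalar. Qed.

Lemma cdotC u v : (cdot u v)^* = cdot v u.
Proof. by rewrite /cdot -[ctr v *m u]ctrK ctrM ctrK ctr_mxE. Qed.

Lemma cdotBl u v w : cdot (u - v) w = cdot u w - cdot v w.
Proof. by rewrite {1}/cdot ctrB mulmxBl !cdotE -raddfB /= mxE eqxx mulr1n. Qed.

Lemma cdotBr u v w : cdot w (u - v) = cdot w u - cdot w v.
Proof. by rewrite {1}/cdot mulmxBr !cdotE -raddfB /= mxE eqxx mulr1n. Qed.

Lemma cdot_eq0 w : cdot w w = 0 -> w = 0.
Proof.
rewrite /cdot mxE => h; apply/matrixP => i j; rewrite ord1 mxE.
have hp (l : 'I_k) : predT l -> 0 <= ctr w 0 l * w l 0.
  by rewrite ctr_mxE mulrC => _; exact: mul_conjC_ge0.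
move: (psumr_eq0P hp h (i := i) isT) => /eqP.
by rewrite ctr_mxE mulrC mul_conjC_eq0 => /eqP.
Qed.

(* The reflection U = 1 - b^-1 w w^† with w = u - v and b = w^† u; the norm
   condition gives b + b^* = w^† w, which is exactly what makes U unitary. *)
Lemma unitary_transport u v : cdot u u = cdot v v ->
  exists U : 'M[C]_k, U *m ctr U = 1%:M /\ U *m u = v.
Proof.
move=> huv; set w := u - v.
have [w0|wn0] := eqVneq w 0.
  exists 1%:M; rewrite ctr1 mulmx1 mul1mx; split => //.
  by apply/eqP; rewrite -subr_eq0 -/w w0.
set b := cdot w u; set c := cdot w w.
have ebc : b + b^* = c.
  by rewrite /b /c cdotC /w !cdotBl !cdotBr huv; ring.
have c0 : c != 0 by apply: contra wn0 => /eqP /cdot_eq0 ->.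
have b0 : b != 0 by apply: contra c0 => /eqP b0; rewrite -ebc b0 conjC0 addr0.
exists (1%:M - b^-1 *: (w *m ctr w)); split; last first.
  rewrite mulmxBl mul1mx -scalemxAl -mulmxA cdotE -/b mul_mx_scalar scalerA mulVf //.
  by rewrite scale1r /w opprB addrC subrK.
clearbody w; rewrite ctrB ctr1 ctrZ ctrM ctrK mulmxBl mul1mx mulmxBr mulmx1.
rewrite -!scalemxAl -!scalemxAr !mulmxA -[w *m ctr w *m w]mulmxA cdotE -/c.
rewrite mul_mx_scalar scalemxAl !scalerA -scalemxAl.
have bc0 : b^* != 0 by rewrite conjC_eq0.
have e : b^-1 * (b^-1^* * c) = b^-1^* + b^-1.
  by rewrite -ebc fmorphV; field; rewrite bc0 b0.
by rewrite scalerA e scalerDl opprB addrK subrK.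
Qed.

Lemma quad_delta_mx (D : 'M[C]_k) (i : 'I_k) :
  (ctr (delta_mx i 0 : 'cV[C]_k) *m D *m (delta_mx i 0 : 'cV[C]_k)) 0 0 = D i i.
Proof.
have -> : ctr (delta_mx i 0 : 'cV[C]_k) = (delta_mx 0 i : 'rV[C]_k).
  by apply/matrixP => a b; rewrite ctr_mxE !mxE rmorph_nat andbC.
by rewrite -rowE -colE !mxE.
Qed.

(* By the spectral theorem P = M^† diag(d) M with M unitary and d > 0; take
   L = M^† diag(sqrt d). *)
Lemma posdef_factor (P : 'M[C]_k) : posdef P -> exists2 L, L \in unitmx & P = L *m ctr L.
Proof.
move=> PP; have uP := posdef_unitmx PP; move: (PP) => [hP _].
have nP : P \is normalmx.
  have tP : map_mx Num.conj P^T = P by rewrite -map_trmx; exact: hP.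
  by apply/normalmxP; rewrite tP.
set M := spectralmx P; set d := spectral_diag P.
have eP : P = invmx M *m diag_mx d *m M by apply/orthomx_spectralP.
have iM : invmx M = ctr M by rewrite invmx_unitary ?spectral_unitarymx // /ctr map_trmx.
have MM : M *m ctr M = 1%:M by rewrite -iM mulmxV ?spectral_unit.
have pD : posdef (diag_mx d).
  have -> : diag_mx d = M *m P *m ctr M.
    by rewrite eP iM !mulmxA MM mul1mx -mulmxA MM mulmx1.
  exact: posdef_congr (spectral_unit P) PP.
have d_gt0 i : 0 < d 0 i.
  have e0 : (delta_mx i 0 : 'cV[C]_k) != 0.
    by apply/eqP => /matrixP /(_ i 0); rewrite !mxE !eqxx => /eqP; rewrite oner_eq0.
  by have := pD.2 _ e0; rewrite quad_delta_mx mxE eqxx mulr1n.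
set s := \row_i sqrtC (d 0 i).
have ess : diag_mx s *m ctr (diag_mx s) = diag_mx d.
  apply/matrixP => i j; rewrite mul_diag_mx !mxE.
  have [->|nij] := eqVneq i j; last by rewrite !mulr0n rmorph0 mulr0.
  rewrite ?eqxx !mulr1n conj_Creal ?ger0_real ?sqrtC_ge0 ?(ltW (d_gt0 j)) //.
  by rewrite -expr2 sqrtCK.
have eL : P = ctr M *m diag_mx s *m ctr (ctr M *m diag_mx s).
  by rewrite ctrM ctrK mulmxA -(mulmxA (ctr M)) ess eP iM.
exists (ctr M *m diag_mx s) => //.
by move: uP; rewrite {1}eL unitmx_mul => /andP[].
Qed.

Lemma posdef_transport (P Q : 'M[C]_k) (a b : 'cV[C]_k) :
  posdef P -> posdef Q -> invquad a P = invquad b Q ->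
  exists2 M, M \in unitmx & M *m P *m ctr M = Q /\ M *m a = b.
Proof.
move=> pP pQ e.
have [Lp uLp eP] := posdef_factor pP; have [Lq uLq eQ] := posdef_factor pQ.
set u := invmx Lp *m a; set v := invmx Lq *m b.
have [U [UU eU]] : exists U : 'M[C]_k, U *m ctr U = 1%:M /\ U *m u = v.
  apply: unitary_transport; move: e.
  by rewrite /invquad /cdot eP eQ !invmxM ?ctr_unitmx // -!ctr_invmx !ctrM !mulmxA.
have uU : U \in unitmx by case: (mulmx1_unit UU).
exists (Lq *m U *m invmx Lp); first by rewrite !unitmx_mul uLq uU unitmx_inv uLp.
split; last by rewrite -!mulmxA -/u eU /v mulKVmx.
have e1 : ctr Lp *m ctr (invmx Lp) = 1%:M by rewrite -ctrM mulVmx // ctr1.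
rewrite eP !ctrM !mulmxA mulmxKV // -(mulmxA _ (ctr Lp)) e1 mulmx1.
by rewrite -(mulmxA _ U) UU mulmx1.
Qed.

End Transport.

Section Statistic.
Variable R : realType.
Local Notation C := R[i].
Variables t r n3 : nat.
Local Notation N := (t + r + n3)%N.
Implicit Types (z w : 'cV[C]_N) (S T : 'M[C]_N).

(* In the splitting N = (t + r) + n3, z_{2.3} and S_{2.3} are the lower
   blocks of the Schur data of (z, S), and z_3, S_33 those of (z, S) itself. *)
Definition quad23 z S :=
  invquad (dsubmx (schur_vec (p := t + r) z S))
          (drsubmx (schur_compl (p := t + r) S)).
Definition quad3 z S := invquad (dsubmx z) (drsubmx S).

Lemma t1E z S :
  t1 z S = if n3 == 0%N then [:: quad23 z S] else [:: quad23 z S; quad3 z S].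
Proof.
have z23E : dsubmx (schur_vec (p := t + r) z S) = z23 z S.
  by rewrite /z23 /schur_vec raddfB /= /z2 /S23 /z3 /S33 -!mul_dsub_mx.
have S23sE : drsubmx (schur_compl (p := t + r) S) = S23s S.
  rewrite /S23s /schur_compl /drsubmx raddfB /= raddfB /= /S22 /S23 /S32 /S33.
  by rewrite -!mul_dsub_mx -mulmx_rsub.
rewrite /t1 /quad23 z23E S23sE; case: eqP => // n3_0.
have S23_0 : S23 S = 0.
  by apply/matrixP => i j; have := ltn_ord j; rewrite [X in (_ < X)%N]n3_0.
by rewrite /z23 /S23s S23_0 !mul0mx !subr0.
Qed.

Lemma t1_inj_quad z w S T :
  t1 z S = t1 w T -> quad23 z S = quad23 w T /\ quad3 z S = quad3 w T.
Proof.
rewrite !t1E; case: eqP => [n3_0|_] e; split.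
- by move: e => /(congr1 (head 0)) /= ->.
- by rewrite /quad3 !(invquad_dim0 _ _ n3_0).
- by move: e => /(congr1 (head 0)) /= ->.
- by move: e => /(congr1 (nth 0 ^~ 1%N)) /= ->.
Qed.

Lemma t1_invariant z S G f : posdef S -> in_calG G -> in_calF f ->
  t1 (G *m z + f) (G *m S *m ctr G) = t1 z S.
Proof.
move=> pS [_ [[dl0 dl0'] [_ uA2 uD]]] [f1 f2].
have pU := posdef_schur (p := t + r) pS.
have udS := posdef_unitmx (posdef_drsubmx pS).
have udU := posdef_unitmx (posdef_drsubmx pU).
set A := ulsubmx G; set B := ursubmx G; set D := drsubmx G.
have eG : G = block_mx A B 0 D by rewrite -dl0 submxK.
have eA : A = block_mx (ulsubmx A) (ursubmx A) 0 (drsubmx A) by rewrite -dl0' submxK.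
have [e1 e2 e3 e4] := block_triu_action A B z uD udS pS.1 f2.
have [i1 i2 _ _] :=
  block_triu_action (ulsubmx A) (ursubmx A) (schur_vec z S) uA2 udU pU.1 f1.
rewrite -eG in e1 e2 e3 e4; rewrite -eA in i1 i2.
by rewrite !t1E /quad23 /quad3 e1 e2 e3 e4 i1 i2 !invquad_congr.
Qed.

Lemma block_triu3_in_calG (A1 : 'M[C]_t) (A3 : 'M[C]_r) (D : 'M[C]_n3) B1 B :
  A1 \in unitmx -> A3 \in unitmx -> D \in unitmx ->
  in_calG (block_mx (block_mx A1 B1 0 A3) B 0 D : 'M[C]_N).
Proof.
move=> uA1 uA3 uD; split.
  by rewrite unitmxE !det_ublock !unitrM -!unitmxE uA1 uA3 uD.
by rewrite !block_mxKul !block_mxKdl !block_mxKdr uA1 uA3 uD.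
Qed.

Lemma t1_maximal z w S T : posdef S -> posdef T -> t1 z S = t1 w T ->
  exists G f, [/\ in_calG G, in_calF f, z = G *m w + f & S = G *m T *m ctr G].
Proof.
move=> pS pT /t1_inj_quad [e23 e3].
have pSs := posdef_schur (p := t + r) pS; have pTs := posdef_schur (p := t + r) pT.
have [D uD [eDT eDw]] :=
  posdef_transport (posdef_drsubmx pT) (posdef_drsubmx pS) (esym e3).
have [A3 uA3 [eA3T eA3w]] :=
  posdef_transport (posdef_drsubmx pTs) (posdef_drsubmx pSs) (esym e23).
(* Any congruence between the top-left blocks will do. *)
have [A1 uA1 [eA1T _]] := posdef_transport (posdef_schur pTs) (posdef_schur pSs)
  (etrans (invquad0 _) (esym (invquad0 _))).
have [eGA rGA] := block_triu_lift pSs.1 pTs.1 (posdef_unitmx (posdef_drsubmx pSs))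
  (posdef_unitmx (posdef_drsubmx pTs)) eA1T eA3T eA3w.
set GA := block_mx A1 _ 0 A3 in eGA rGA.
have [eG rG] := block_triu_lift pS.1 pT.1 (posdef_unitmx (posdef_drsubmx pS))
  (posdef_unitmx (posdef_drsubmx pT)) eGA eDT eDw.
set G := block_mx GA _ 0 D in eG rG.
exists G, (z - G *m w); split.
- exact: block_triu3_in_calG.
- by rewrite /in_calF rG col_mxKu rGA col_mxKd col_mxKd.
- by rewrite addrC subrK.
- by rewrite eG.
Qed.

End Statistic.

Unset Implicit Arguments.

Theorem proposition1 (R : realType) (t r n3 K : nat) :
  (2 <= t + r + n3)%N -> (1 <= t)%N -> (1 <= r)%N -> (t + r + n3 <= K)%N ->
  maximal_invariant (@t1 R t r n3).
Proof.
move=> _ _ _ _; split.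
  move=> [z S] [G f] pS [inG inF] /=.
  exact: t1_invariant.
move=> [z S] [w T] pS pT /= e.
have [G [f [inG inF ez eS]]] := t1_maximal pS pT e.
by exists (G, f) => //; rewrite /act /= -ez -eS.
Qed.
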